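(* Let $T$ be a rhombic alternative tableau of type $X\in B_n^r$ with tiling $\mathcal{T}$, and run the label-passing algorithm on $T$. Suppose that a label $J$ is passed along the line of a west-strip $\mathbf{w}$ eastward out of a tile $\mathbf{t}$ of $\mathbf{w}$, and that no tile of $\mathbf{w}$ to the right of $\mathbf{t}$ contains a $\beta$. Then at the completion of the algorithm, the southeast boundary edge (external vertex) of $\mathbf{w}$ carries the label $\{J_{\max}\}$, where $J_{\max}=\max J$.
   Context: Words and diagrams. For $0\le r\le n$ let $B_n^r$ be the set of words $X\in\{H,L,0\}^n$ with exactly $r$ letters $L$. If $X$ has $k$ letters $H$, $r$ letters $L$ and $\ell$ letters $0$, its rhombic diagram $\Gamma(X)$ is the closed region bounded by two paths of unit steps, using the directions west (horizontal), south (vertical) and southwest (diagonal: a fixed unit vector strictly between west and south), both going from a point $P$ to a point $Q$: the northwest boundary consists of $\ell$ west steps, then $r$ southwest steps, then $k$ south steps; the southeast boundary is obtained by reading $X$ left to right and taking a west step for each $0$, a southwest step for each $L$, a south step for each $H$. A tiling of $\Gamma(X)$ is a tiling by unit rhombi of three kinds: squares (horizontal and vertical edges), tall rhombi (vertical and diagonal edges), short rhombi (horizontal and diagonal edges). A west-strip (resp. north-strip, northwest-strip) is a maximal set of tiles connected through shared vertical (resp. horizontal, diagonal) edges; each runs from an edge of the southeast boundary to an edge of the northwest boundary. Rhombic alternative tableaux. A rhombic alternative tableau (RAT) of type $X$ with tiling $\mathcal{T}$ is a filling of the tiles of $\mathcal{T}$, each tile empty or containing one of $\alpha,\beta,q$,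 where $\alpha$ occurs only in squares and short rhombi and $\beta$ only in squares and tall rhombi, such that: (i) every tile in the same west-strip as a tile containing $\beta$ and to its left is empty; (ii) every tile in the same north-strip as a tile containing $\alpha$ and above it is empty; (iii) every tile not forced to be empty by (i),(ii) contains $\alpha$, $\beta$ or $q$. Label-passing algorithm. A label is a finite set of consecutive integers; for labels $C,D$ write $D\succ C$ if both are nonempty and $\min D=\max C+1$. Given a RAT $T$: through each west-strip draw a line through the midpoints of its vertical edges, through each north-strip a line through midpoints of its horizontal edges, and through each northwest-strip a line through midpoints of its diagonal edges (all passing through the tile centres). For every tile containing $\alpha$ erase the part of its north-strip line above the tile's centre; for every tile containing $\beta$ erase the part of its west-strip line to the left of the tile's centre. This yields a forest of binary trees whose branching vertices are the centres of tiles containing $\alpha$ or $\beta$, whose leaves (external vertices) are the southeast boundary edges and whose roots are northwest boundary edges; roots are red/green/blue according as they lie on a west-/northwest-/north-strip. Add a special trivial green root at $Q$ with one fictitious leaf. Order the roots: red roots from top to bottom, then green roots (starting with the special one) from southwest to northeast, then blue roots from left to right. Label the roots so that each root label has as many elements as its tree has leaves (one for the special root), each root's label is $\succ$ the label of the preceding root, and the union of all root labels is $\{1,\dots,n+1\}$. Labels are then passed from the roots towards the leaves (southeastward) along branches, unchanged along branches; when a label $B$ reaches a branching vertex $v$ it is split as $B=C\cup D$ with $D\succ C$, each of the two outgoing branches getting a label of size equal to its number of leaves, according to: (I) if $v$ lies in a rhombus (tall or short), $D$ goes to the outgoing branch along the northwest-strip; (II) if $v$ lies in a square containing $\alpha$,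 $D$ goes to the branch leaving eastward and $C$ to the branch leaving southward; (III) if $v$ lies in a square containing $\beta$, $D$ goes to the branch leaving southward and $C$ to the branch leaving eastward. At completion every southeast boundary edge carries a singleton label. *)

From HB Require Import structures.
From mathcomp Require Import all_boot.
Set Implicit Arguments.
Unset Strict Implicit.
Unset Printing Implicit Defensive.

Inductive letter := LH | LL | L0.
Definition letter_eqb (a b : letter) : bool :=
  match a, b with LH, LH | LL, LL | L0, L0 => true | _, _ => false end.
Lemma letter_eqP : Equality.axiom letter_eqb.
Proof. by case; case; constructor. Qed.
HB.instance Definition _ := hasDecEq.Build letter letter_eqP.

Inductive cell := Empty | Alpha | Beta | Qc.
Definition cell_eqb (a b : cell) : bool :=
  match a, b with Empty, Empty | Alpha, Alpha | Beta, Beta | Qc, Qc => true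
  | _, _ => false end.
Lemma cell_eqP : Equality.axiom cell_eqb.
Proof. by case; case; constructor. Qed.
HB.instance Definition _ := hasDecEq.Build cell cell_eqP.

Definition in_B (n r : nat) (X : seq letter) : bool :=
  (size X == n) && (count_mem LL X == r).

(* Order 0 < L < H ; a tile is a swap of an adjacent inversion for this order. *)
Definition rank (c : letter) : nat :=
  match c with L0 => 0 | LL => 1 | LH => 2 end.

Section RAT.
Variable X : seq letter.          (* the type; southeast boundary *)
Variable fl : seq nat.            (* the tiling, as a flip sequence *)
Variable fill : nat -> cell.

Local Notation n := (size X).
Local Notation m := (size fl).

(* strips are indexed by the position w < n of their southeast boundary edge
   in X; the strip is a west-/northwest-/north-strip iff X_w = H / L / 0. *)
Definition typ (w : nat) : letter := nth L0 X w.

Definition swap_at (s : seq nat) (p : nat) : seq nat :=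
  take p s ++ [:: nth 0 s p.+1; nth 0 s p] ++ drop p.+2 s.

(* intermediate path after k tiles have been swept from the SE boundary:
   the sequence of strips whose edges it consists of, from P to Q *)
Definition state (k : nat) : seq nat := foldl swap_at (iota 0 n) (take k fl).

Definition tpos (k : nat) : nat := nth 0 fl k.
(* the two strips crossing at tile number k *)
Definition ta (k : nat) : nat := nth 0 (state k) (tpos k).
Definition tb (k : nat) : nat := nth 0 (state k) (tpos k).+1.

Definition tile_has (k w : nat) : bool := (w == ta k) || (w == tb k).
Definition tile_hasT (k : nat) (c : letter) : bool :=
  (typ (ta k) == c) || (typ (tb k) == c).
(* the strip of letter-type c through tile k (meaningful if tile_hasT k c) *)
Definition strip_of (k : nat) (c : letter) : nat :=
  if typ (ta k) == c then ta k else tb k.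

(* square: {H,0}; tall rhombus: {H,L}; short rhombus: {L,0} *)
Definition is_square k := tile_hasT k LH && tile_hasT k L0.
Definition is_rhombus k := tile_hasT k LL.

(* fl encodes a tiling of Gamma(X): every step swaps an adjacent inversion,
   and at the end the path is the northwest boundary 0^l L^r H^k. *)
Definition valid_tiling : Prop :=
  (forall k, k < m -> (tpos k).+1 < n /\ rank (typ (tb k)) < rank (typ (ta k)))
  /\ sorted leq [seq rank (typ w) | w <- state m].

(* tile k is forced empty by rules (i),(ii): it lies to the left of a beta in
   its west-strip, or above an alpha in its north-strip.  Along a strip,
   tiles with larger index are further northwest (left / above). *)
Definition forced (k : nat) : Prop :=
  exists k0 w, k0 < k /\ tile_has k0 w /\ tile_has k w /\
    ((typ w = LH /\ fill k0 = Beta) \/ (typ w = L0 /\ fill k0 = Alpha)).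

Definition is_RAT : Prop :=
  valid_tiling /\
  (forall k, k < m -> fill k = Alpha -> tile_hasT k L0) /\
  (forall k, k < m -> fill k = Beta -> tile_hasT k LH) /\
  (forall k k' w, k < k' -> k' < m -> typ w = LH -> tile_has k w ->
     tile_has k' w -> fill k = Beta -> fill k' = Empty) /\
  (forall k k' w, k < k' -> k' < m -> typ w = L0 -> tile_has k w ->
     tile_has k' w -> fill k = Alpha -> fill k' = Empty) /\
  (forall k, k < m -> ~ forced k -> fill k <> Empty).

(* A "point" (k, w) is the midpoint of the edge of strip w in
   the intermediate path state k (k = 0: southeast boundary, k = m:
   northwest boundary).  The line of w is present there unless it was erased:
   west-strip lines left of a beta, north-strip lines above an alpha. *)
Definition alive (w k : nat) : bool :=
  match typ w with
  | LH => ~~ has (fun k0 => tile_has k0 w && (fill k0 == Beta)) (iota 0 k)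
  | L0 => ~~ has (fun k0 => tile_has k0 w && (fill k0 == Alpha)) (iota 0 k)
  | LL => true
  end.

Definition branching (k : nat) : bool := (fill k == Alpha) || (fill k == Beta).
(* the line erased on the northwest side of a branching tile *)
Definition cut (k : nat) : nat :=
  if fill k == Alpha then strip_of k L0 else strip_of k LH.
(* the line that goes through a branching tile (the incoming branch) *)
Definition cont (k : nat) : nat := if cut k == ta k then tb k else ta k.

Fixpoint nleaves (k w : nat) : nat :=
  match k with
  | 0 => 1
  | k'.+1 =>
    if tile_has k' w && branching k' then
      (if w == cont k' then nleaves k' (ta k') + nleaves k' (tb k') else 0)
    else nleaves k' w
  end.

(* outgoing branch receiving D (the upper part) at a branching tile k:
   (I) rhombus: along the northwest-strip; (II) alpha square: eastward, i.e.
   along the west-strip; (III) beta square: southward, i.e. along the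
   north-strip. *)
Definition drecv (k : nat) : nat :=
  if is_rhombus k then strip_of k LL
  else if fill k == Alpha then strip_of k LH else strip_of k L0.
Definition crecv (k : nat) : nat := if drecv k == ta k then tb k else ta k.

(* roots, in the prescribed order; None is the special green root at Q.
   Red: H-edges of the NW boundary top to bottom (path order);
   green: special, then L-edges southwest to northeast (reverse path order);
   blue: 0-edges left to right (reverse path order). *)
Definition roots : seq (option nat) :=
  map Some [seq w <- state m | (typ w == LH) && alive w m] ++
  None :: rev (map Some [seq w <- state m | (typ w == LL) && alive w m]) ++
  rev (map Some [seq w <- state m | (typ w == L0) && alive w m]).

Definition root_size (o : option nat) : nat :=
  match o with None => 1 | Some w => nleaves m w end.

Definition root_label (w : nat) : seq nat :=
  let sz := map root_size roots in
  let i := index (Some w) roots in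
  iota (1 + sumn (take i sz)) (nth 0 sz i).

(* label on point (k, w), computed from the roots towards the leaves.
   At a branching tile the incoming label B is split as C ++ D with
   |C| = number of leaves of the branch receiving C. *)
Fixpoint labelF (d k w : nat) : seq nat :=
  match d with
  | 0 => root_label w
  | d'.+1 =>
    if tile_has k w && branching k then
      let B := labelF d' k.+1 (cont k) in
      let c := nleaves k (crecv k) in
      if w == drecv k then drop c B else take c B
    else labelF d' k.+1 w
  end.

Definition label (k w : nat) : seq nat := labelF (m - k) k w.

End RAT.

(* Going east along the west-strip w from the tile t, no beta erases the line
   of w, so every branching tile met is an alpha square, where rule (II) hands
   the upper part D of the incoming label back to w.  Hence the label of the
   boundary edge of w is a suffix of J.  Every label is an interval whose size
   is the number of leaves below it (erased lines carry no leaves, since all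
   later tiles on their strip are empty); the boundary edge is a single leaf,
   and the one-element suffix of an interval J is {max J}. *)

From Pilot Require Import Defs.
From mathcomp Require Import all_boot zify.

Set Implicit Arguments.
Unset Strict Implicit.
Unset Printing Implicit Defensive.

Lemma perm_swap_at (s : seq nat) p : p.+1 < size s -> perm_eq (swap_at s p) s.
Proof.
move=> hp; rewrite /swap_at.
have E : drop p s = nth 0 s p :: nth 0 s p.+1 :: drop p.+2 s.
  by rewrite (drop_nth 0) ?(drop_nth 0 (n := p.+1)) //; lia.
rewrite -[X in perm_eq _ X](cat_take_drop p s) E perm_cat2l.
by apply/permP => P /=; lia.
Qed.

Lemma bigmax_iota a b : \max_(j <- iota a b.+1) j = a + b.
Proof.
elim: b a => [|b IH] a; first by rewrite big_cons big_nil; lia.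
by rewrite /= big_cons IH; lia.
Qed.

Lemma drop_iota_size1 a b c :
  size (drop c (iota a b)) = 1 -> drop c (iota a b) = [:: \max_(j <- iota a b) j].
Proof.
rewrite drop_iota size_iota => hbc.
have -> : b = c.+1 by lia.
by rewrite bigmax_iota subSnn.
Qed.

Section LabelPassing.

Variables (X : seq letter) (fl : seq nat) (fill : nat -> cell).
Hypothesis RAT : is_RAT X fl fill.

Local Notation n := (size X).
Local Notation m := (size fl).
Local Notation typ := (typ X).
Local Notation state := (state X fl).
Local Notation ta := (ta X fl).
Local Notation tb := (tb X fl).
Local Notation tile_has := (tile_has X fl).
Local Notation strip_of := (strip_of X fl).
Local Notation branching := (branching fill).
Local Notation cut := (cut X fl fill).
Local Notation cont := (cont X fl fill).
Local Notation drecv := (drecv X fl fill).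
Local Notation crecv := (crecv X fl fill).
Local Notation nleaves := (nleaves X fl fill).
Local Notation alive := (alive X fl fill).
Local Notation label := (label X fl fill).

Lemma tile_pair k u v : tile_has k u -> tile_has k v -> u != v ->
  (ta k = u /\ tb k = v) \/ (ta k = v /\ tb k = u).
Proof.
by rewrite /tile_has => /orP[]/eqP-> /orP[]/eqP->; rewrite ?eqxx //; [left|right].
Qed.

Lemma tile_has_strip_of k c : tile_has k (strip_of k c).
Proof. by rewrite /tile_has /strip_of; case: ifP; rewrite eqxx ?orbT. Qed.

Lemma tile_hasTP k c : reflect (exists2 u, tile_has k u & typ u = c) (tile_hasT X fl k c).
Proof.
apply: (iffP orP) => [[]/eqP<-|[u /orP[]/eqP-> <-]];
  [exists (ta k) | exists (tb k) | left | right] => //.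
all: by rewrite /tile_has eqxx ?orbT.
Qed.

Lemma state_perm k : k <= m -> perm_eq (state k) (iota 0 n).
Proof.
have [[hv _] _] := RAT.
elim: k => [|k IH] hk; first by rewrite /state take0.
rewrite /state (take_nth 0) // foldl_rcons.
apply: perm_trans (IH (ltnW hk)); apply: perm_swap_at.
by rewrite (perm_size (IH (ltnW hk))) size_iota; case: (hv k hk).
Qed.

Lemma nth_state_lt k i : k <= m -> i < n -> nth 0 (state k) i < n.
Proof.
move=> hk hi; have P := state_perm hk.
have : nth 0 (state k) i \in iota 0 n.
  by rewrite -(perm_mem P) mem_nth // (perm_size P) size_iota.
by rewrite mem_iota.
Qed.

Lemma ta_lt k : k < m -> ta k < n.
Proof. by move=> hk; have [[hv _] _] := RAT; apply: nth_state_lt (ltnW (hv k hk).1); lia. Qed.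

Lemma tb_lt k : k < m -> tb k < n.
Proof. by move=> hk; have [[hv _] _] := RAT; apply: nth_state_lt (hv k hk).1; lia. Qed.

Lemma ta_neq_tb k : k < m -> ta k != tb k.
Proof.
move=> hk; have [[hv _] _] := RAT; have [_ hr] := hv k hk.
by apply/eqP => e; rewrite e ltnn in hr.
Qed.

Lemma tile_has_lt k w : k < m -> tile_has k w -> w < n.
Proof. by move=> hk /orP[]/eqP->; [apply: ta_lt | apply: tb_lt]. Qed.

(* The two strips of a tile have different ranks, hence different types. *)
Lemma strip_of_tile k c w : k < m -> tile_has k w -> typ w = c -> strip_of k c = w.
Proof.
move=> hk hw <-; have [[hv _] _] := RAT; have [_ hr] := hv k hk.
rewrite /strip_of; move: hw hr; rewrite /tile_has.
by case/orP => /eqP->; rewrite ?eqxx // => hr; case: eqP => // e; rewrite e ltnn in hr.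
Qed.

Lemma tile_has_cut k : tile_has k (cut k).
Proof. by rewrite /cut; case: ifP => _; apply: tile_has_strip_of. Qed.

Lemma tile_has_cont k : tile_has k (cont k).
Proof. by rewrite /tile_has /cont; case: ifP; rewrite eqxx ?orbT. Qed.

Lemma tile_has_drecv k : tile_has k (drecv k).
Proof. by rewrite /drecv; repeat case: ifP => _; apply: tile_has_strip_of. Qed.

Lemma cont_neq_cut k : k < m -> cont k != cut k.
Proof.
move=> hk; rewrite /cont; case: (eqVneq (cut k) (ta k)) => [->|ne].
  by rewrite eq_sym ta_neq_tb.
by rewrite eq_sym.
Qed.

Lemma drecv_crecv k : k < m ->
  (drecv k = ta k /\ crecv k = tb k) \/ (drecv k = tb k /\ crecv k = ta k).
Proof.
move=> hk; rewrite /crecv; have := tile_has_drecv k.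
case/orP => /eqP->; rewrite ?eqxx; first by left.
by rewrite eq_sym (negbTE (ta_neq_tb hk)); right.
Qed.

Lemma nleaves_step k w : ~~ (tile_has k w && branching k) -> nleaves k.+1 w = nleaves k w.
Proof. by move=> h; rewrite /= (negbTE h). Qed.

Lemma nleaves_cont k : branching k ->
  nleaves k.+1 (cont k) = nleaves k (ta k) + nleaves k (tb k).
Proof. by move=> hb; rewrite /= tile_has_cont hb eqxx. Qed.

Lemma nleaves_cut k : k < m -> branching k -> nleaves k.+1 (cut k) = 0.
Proof.
move=> hk hb; rewrite /= tile_has_cut hb.
by rewrite eq_sym (negbTE (cont_neq_cut hk)).
Qed.

Definition erases (k w : nat) : Prop :=
  (typ w = LH /\ fill k = Beta) \/ (typ w = L0 /\ fill k = Alpha).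

Lemma not_alive_erased w k : ~~ alive w k -> exists k0, [/\ k0 < k, tile_has k0 w & erases k0 w].
Proof.
rewrite /alive /erases; case Ht: (typ w) => //=; rewrite negbK => /hasP[k0];
  rewrite mem_iota => /andP[_ hk0] /andP[hw /eqP hf]; exists k0; split => //; tauto.
Qed.

Lemma cut_erases k w : k < m -> tile_has k w -> erases k w -> branching k /\ cut k = w.
Proof.
move=> hk hw [[Ht hf]|[Ht hf]]; rewrite /branching /cut hf /=;
  by split => //; apply: strip_of_tile.
Qed.

Lemma not_branching_after_erase k0 k w : k0 < k < m ->
  tile_has k0 w -> tile_has k w -> erases k0 w -> ~~ branching k.
Proof.
move=> /andP[lt hk] h0 h [[Ht hf]|[Ht hf]]; have [_ [_ [_ [rB [rA _]]]]] := RAT.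
  by rewrite /branching (rB k0 k w) // (ltn_trans lt hk).
by rewrite /branching (rA k0 k w) // (ltn_trans lt hk).
Qed.

(* The erasing tile cuts the line, and rules (i), (ii) leave every later tile of the strip empty. *)
Lemma nleaves_dead w : ~~ alive w m -> nleaves m w = 0.
Proof.
case/not_alive_erased => k0 [hk0 h0 he].
have [hb hcut] := cut_erases hk0 h0 he.
suff: forall j, k0 < j <= m -> nleaves j w = 0 by apply; rewrite hk0 leqnn.
elim=> [|j IH] // /andP[hj hjm]; case: (eqVneq j k0) => [->|ne].
  by rewrite -{1}hcut nleaves_cut.
have hj0 : k0 < j by lia.
rewrite nleaves_step; first by apply: IH; rewrite hj0 ltnW.
apply/nandP; case: (boolP (tile_has j w)) => hw; [right|by left].
by apply: (not_branching_after_erase _ h0); rewrite ?hj0.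
Qed.

Lemma mem_roots w : w < n -> (Some w \in Defs.roots X fl fill) = alive w m.
Proof.
move=> hw; have ws : w \in state m by rewrite (perm_mem (state_perm (leqnn _))) mem_iota.
rewrite /Defs.roots !(mem_cat, in_cons, mem_rev, mem_map (@Some_inj _), mem_filter) ws /=.
by case: (typ w) => /=; rewrite ?andbT ?orbF.
Qed.

Lemma size_root_label w : w < n -> size (root_label X fl fill w) = nleaves m w.
Proof.
move=> hw; rewrite /root_label size_iota.
case: (boolP (Some w \in Defs.roots X fl fill)) => hin.
  by rewrite (nth_map None) ?index_mem // nth_index.
rewrite nth_default; last by rewrite size_map memNindex.
by rewrite nleaves_dead // -mem_roots.
Qed.

Lemma label_root w : label m w = root_label X fl fill w.
Proof. by rewrite /label subnn. Qed.

Lemma label_step k w : k < m ->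
  label k w =
    if tile_has k w && branching k then
      let B := label k.+1 (cont k) in
      let c := nleaves k (crecv k) in
      if w == drecv k then drop c B else take c B
    else label k.+1 w.
Proof. by move=> hk; rewrite /label (_ : m - k = (m - k.+1).+1) //; lia. Qed.

Lemma label_iota k w : exists a b, label k w = iota a b.
Proof.
rewrite /label; move: (m - k) => d.
elim: d k w => [|d IH] k w /=; first by rewrite /root_label; eauto.
case: ifP => _; last exact: IH.
have [a [b ->]] := IH k.+1 (cont k).
by case: ifP => _; [rewrite drop_iota | rewrite take_iota]; eauto.
Qed.

Lemma size_label k w : k <= m -> w < n -> size (label k w) = nleaves k w.
Proof.
move=> hkm; have [d hd] : exists d, d + k = m by exists (m - k); rewrite subnK.
elim: d k w hd {hkm} => [|d IH] k w hd hw.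
  by rewrite (_ : k = m) ?label_root ?size_root_label //; lia.
have hk : k < m by lia.
have IH' w' : w' < n -> size (label k.+1 w') = nleaves k.+1 w'.
  by apply: IH; rewrite addnS -addSn.
rewrite label_step //; case: ifP => [/andP[hwk hbr]|hn]; last first.
  by rewrite IH' // nleaves_step ?hn.
have hB : size (label k.+1 (cont k)) = nleaves k (ta k) + nleaves k (tb k).
  by rewrite IH' ?nleaves_cont // (tile_has_lt hk (tile_has_cont k)).
have ab := ta_neq_tb hk; have ba : tb k != ta k by rewrite eq_sym.
move: hwk; rewrite /tile_has /=.
by case: (drecv_crecv hk) => -[-> ->] /orP[]/eqP->;
  rewrite ?eqxx ?(negbTE ab) ?(negbTE ba) ?size_drop ?size_take hB; try case: ltnP; lia.
Qed.

(* Rule (II): in an alpha square the part D of the label leaves eastward, staying on the west-strip. *)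
Lemma alpha_west_strip k w : k < m -> typ w = LH -> tile_has k w -> fill k = Alpha ->
  cont k = w /\ drecv k = w.
Proof.
move=> hk Ht hw hA; have [_ [rA _]] := RAT.
have /tile_hasTP[u hu Hu] := rA k hk hA.
have uw : u != w by apply/eqP => e; rewrite e Ht in Hu.
rewrite /cont /cut /drecv /is_rhombus /tile_hasT /strip_of hA /=.
by case: (tile_pair hu hw uw) => -[-> ->]; rewrite Ht Hu ?eqxx ?(negbTE uw) //= eq_sym (negbTE uw).
Qed.

Lemma label_suffix w t k : typ w = LH -> t <= m ->
  (forall t', t' < t -> tile_has t' w -> fill t' <> Beta) ->
  k <= t -> exists c, label k w = drop c (label t w).
Proof.
move=> Ht htm hnb /subnK; move: (t - k) => e; elim: e k => [|e IH] k hke.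
  by exists 0; rewrite drop0 -hke.
have hk : k < m by lia.
have [c Hc] : exists c, label k.+1 w = drop c (label t w).
  by apply: IH; rewrite addnS -addSn.
rewrite label_step //; case: ifP => [/andP[hw hbr]|_]; last by exists c.
have hA : fill k = Alpha.
  move: hbr; rewrite /branching => /orP[/eqP //|/eqP hB].
  by case: (hnb k) => //; lia.
have [-> ->] := alpha_west_strip hk Ht hw hA.
by rewrite /= eqxx Hc drop_drop; eexists.
Qed.

End LabelPassing.

Theorem lemma3p9 (n r : nat) (X : seq letter) (fl : seq nat)
    (fill : nat -> cell) (w t : nat) :
  in_B n r X ->
  is_RAT X fl fill ->
  w < n -> typ X w = LH ->
  t < size fl -> tile_has X fl t w ->
  (forall t', t' < t -> tile_has X fl t' w -> fill t' <> Beta) ->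
  label X fl fill 0 w = [:: \max_(j <- label X fl fill t w) j].
Proof.
move=> /andP[/eqP <- _] RAT hw Ht ht _ hnb.
have [c Hc] := label_suffix RAT Ht (ltnW ht) hnb (leq0n t).
have hs : size (label X fl fill 0 w) = 1 by rewrite size_label.
have [a [b Hab]] := label_iota X fl fill t w.
by rewrite Hc Hab in hs *; rewrite drop_iota_size1.
Qed.
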